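(* Assume (A1)–(A4), let $x_1\in R\mathbb{B}$, and run the Algorithm with $\eta>0$ and $\rho\in[0,\epsilon]$. Let $x_\rho^\star\in\arg\min_{x\in\mathcal{X}_\rho}\sum_{t=1}^Tf_t(x)$. Then $$\sum_{t=1}^T\big(f_t(x_t)-f_t(x_\rho^\star)\big)\le\frac{2R^2}{\eta}+\frac{\eta}{2}G_f^2T .$$
   Context: Let $d,T$ be positive integers and $[T]=\{1,\dots,T\}$. Write $\|\cdot\|$ for the Euclidean norm and $\mathbb{B}=\{x\in\mathbb{R}^d:\|x\|\le1\}$. For a closed convex set $\mathcal{Y}$, $\Pi_{\mathcal{Y}}$ is the Euclidean projection onto $\mathcal{Y}$. For $a\in\mathbb{R}$, $[a]_+=\max(a,0)$. Let $g:\mathbb{R}^d\to\mathbb{R}$ be convex with subdifferential $\partial g(x)$. Set $\mathcal{X}=\{x:g(x)\le0\}$, and for $\rho\ge0$ set $\mathcal{X}_\rho=\{x:g(x)\le-\rho\}$. Assumptions: (A1) there is $R>0$ with $\mathcal{X}\subseteq R\mathbb{B}$; (A2) $f_1,\dots,f_T:\mathbb{R}^d\to\mathbb{R}$ are convex and differentiable, and there is $G_f>0$ with $\|\nabla f_t(x)\|\le G_f$ for all $x\in R\mathbb{B}$ and all $t\in[T]$; (A3) there is $G_g>0$ with $\|s\|\le G_g$ for all $s\in\partial g(x)$ and all $x\in R\mathbb{B}$; (A4) there are $\sigma,\epsilon>0$ such that $\mathcal{X}'=\{x:g(x)=-\epsilon\}$ is nonempty and $\|s\|\ge\sigma$ for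 all $s\in\partial g(x)$ and all $x\in\mathcal{X}'$. Algorithm (OGD with Polyak feasibility steps). Inputs are $x_1\in\mathbb{R}^d$, $\eta>0$ and $\rho\ge0$. For $t=1,\dots,T$: - play $x_t$ and then receive $f_t$; the functions may be chosen adversarially and may depend on past actions; - query $g_t=g(x_t)$ and some $s_t\in\partial g(x_t)$; - set $y_t=x_t-\eta\nabla f_t(x_t)$; - if $s_t\ne0$, set $x_{t+1}=\Pi_{R\mathbb{B}}\big(y_t-\frac{[g_t+s_t^\top(y_t-x_t)+\rho]_+}{\|s_t\|^2}s_t\big)$; if $s_t=0$, set $x_{t+1}=\Pi_{R\mathbb{B}}(y_t)$. *)

From HB Require Import structures.
From mathcomp Require Import all_boot all_order all_algebra.
From mathcomp Require Import reals.
Set Implicit Arguments. Unset Strict Implicit. Unset Printing Implicit Defensive.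
Import Order.TTheory GRing.Theory Num.Theory.
Local Open Scope ring_scope.

Section Defs.
Variables (R : realType) (d : nat).
Notation vec := 'rV[R]_d.

Definition dot (u v : vec) : R := \sum_(i < d) u 0 i * v 0 i.
Definition enorm (u : vec) : R := Num.sqrt (dot u u).

Definition pos_part (a : R) : R := Num.max a 0.

Definition convex_fun (f : vec -> R) : Prop :=
  forall (x y : vec) (l : R), 0 <= l -> l <= 1 ->
    f (l *: x + (1 - l) *: y) <= l * f x + (1 - l) * f y.

Definition subgrad (g : vec -> R) (x s : vec) : Prop :=
  forall y : vec, g x + dot s (y - x) <= g y.

Definition is_gradient (f : vec -> R) (x gx : vec) : Prop :=
  forall e : R, 0 < e -> exists2 delta : R, 0 < delta &
    forall h : vec, enorm h < delta ->
      `|f (x + h) - f x - dot gx h| <= e * enorm h.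

Definition is_proj_ball (Rad : R) (y p : vec) : Prop :=
  enorm p <= Rad /\ forall z : vec, enorm z <= Rad -> enorm (y - p) <= enorm (y - z).

(* One step of OGD with Polyak feasibility steps, before projection *)
Definition polyak_point (eta rho gt : R) (gradft st xt : vec) : vec :=
  let yt := xt - eta *: gradft in
  if st == 0 then yt
  else yt - (pos_part (gt + dot st (yt - xt) + rho) / (enorm st ^+ 2)) *: st.

End Defs.

From HB Require Import structures.
From mathcomp Require Import all_boot all_order all_algebra.
From mathcomp Require Import reals ring lra.
Import Order.TTheory GRing.Theory Num.Theory.
Set Implicit Arguments. Unset Strict Implicit. Unset Printing Implicit Defensive.
Local Open Scope ring_scope.

(* Neither the projection onto the ball nor the Polyak step moves the iterate
   away from a comparator [z] with [g z <= -rho]: [z] lies in the ball by (A1),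
   and it lies in the half-space cut out by the linearisation of [g] at [x_t]
   because subgradients under-estimate [g].  Hence
   [|x_{t+1} - z|^2 <= |x_t - eta grad_t - z|^2], and the usual online
   gradient descent telescoping, with [|x_1 - z|^2 <= 4 R^2], gives the bound. *)

Lemma le0_of_le_scaled (R : realFieldType) (a b : R) :
  (forall l, 0 < l -> l <= 1 -> a <= l * b) -> a <= 0.
Proof.
move=> small; rewrite leNgt; apply/negP => a0.
have ab : a <= b by rewrite -[b]mul1r; apply: small; rewrite ?ler01.
have b0 : 0 < b by apply: lt_le_trans ab.
have l0 : 0 < a / (2 * b) by rewrite divr_gt0 ?mulr_gt0.
have l1 : a / (2 * b) <= 1 by rewrite ler_pdivrMr ?mulr_gt0 // mul1r; lra.
have := small _ l0 l1.
have -> : a / (2 * b) * b = a / 2 by field; rewrite gt_eqF.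
lra.
Qed.

Section Dot.
Variables (R : realType) (d : nat).
Implicit Types (u v w : 'rV[R]_d) (a : R).

Lemma dotC u v : dot u v = dot v u.
Proof. by apply: eq_bigr => i _; rewrite mulrC. Qed.

Lemma dotDl u v w : dot (u + v) w = dot u w + dot v w.
Proof. by rewrite /dot -big_split; apply: eq_bigr => i _; rewrite mxE mulrDl. Qed.

Lemma dotDr u v w : dot w (u + v) = dot w u + dot w v.
Proof. by rewrite dotC dotDl !(dotC w). Qed.

Lemma dotZl a u v : dot (a *: u) v = a * dot u v.
Proof. by rewrite /dot mulr_sumr; apply: eq_bigr => i _; rewrite mxE mulrA. Qed.

Lemma dotZr a u v : dot v (a *: u) = a * dot v u.
Proof. by rewrite dotC dotZl dotC. Qed.

Lemma dotNl u v : dot (- u) v = - dot u v.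
Proof. by rewrite -scaleN1r dotZl mulN1r. Qed.

Lemma dotNr u v : dot v (- u) = - dot v u.
Proof. by rewrite dotC dotNl dotC. Qed.

Definition dotE := (dotDl, dotDr, dotZl, dotZr, dotNl, dotNr).

Lemma dot_ge0 u : 0 <= dot u u.
Proof. by apply: sumr_ge0 => i _; rewrite -expr2 sqr_ge0. Qed.

Lemma enorm_ge0 u : 0 <= enorm u.
Proof. exact: sqrtr_ge0. Qed.

Lemma enorm_sqr u : enorm u ^+ 2 = dot u u.
Proof. by rewrite sqr_sqrtr // dot_ge0. Qed.

Lemma enorm_leE u r : 0 <= r -> (enorm u <= r) = (dot u u <= r ^+ 2).
Proof. by move=> r0; rewrite -enorm_sqr ler_sqr // nnegrE ?enorm_ge0. Qed.

Lemma enorm_le_dot u v : enorm u <= enorm v -> dot u u <= dot v v.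
Proof. by move=> uv; rewrite -!enorm_sqr ler_sqr // nnegrE ?enorm_ge0. Qed.

Lemma enormZ a u : 0 <= a -> enorm (a *: u) = a * enorm u.
Proof.
move=> a0; rewrite /enorm dotZl dotZr mulrA sqrtrM ?mulr_ge0 //.
by rewrite -expr2 sqrtr_sqr ger0_norm.
Qed.

Lemma dot_segment u v l :
  dot (u + l *: (v - u)) (u + l *: (v - u))
  = (1 - l) * dot u u + l * dot v v - l * (1 - l) * dot (v - u) (v - u).
Proof. by rewrite !dotE (dotC v u); ring. Qed.

Lemma dot_subr_le u v : dot (u - v) (u - v) <= 2 * dot u u + 2 * dot v v.
Proof. by have := dot_ge0 (u + v); rewrite !dotE (dotC v u); lra. Qed.

End Dot.

Section Steps.
Variables (R : realType) (d : nat).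
Implicit Types (u v x y z p : 'rV[R]_d).

Lemma enorm_segment_le r u v l : 0 <= l -> l <= 1 ->
  enorm u <= r -> enorm v <= r -> enorm (u + l *: (v - u)) <= r.
Proof.
move=> l0 l1 ur vr; have r0 : 0 <= r by apply: le_trans ur; apply: enorm_ge0.
move: ur vr; rewrite !enorm_leE // dot_segment => ur vr.
have := dot_ge0 (v - u); have : 0 <= l * (1 - l) by apply: mulr_ge0; lra.
nra.
Qed.

Lemma nearest_point_obtuse y p z :
  (forall l, 0 < l -> l <= 1 -> enorm (y - p) <= enorm (y - (p + l *: (z - p)))) ->
  dot (y - p) (z - p) <= 0.
Proof.
move=> nearest; apply: (@le0_of_le_scaled _ _ (dot (z - p) (z - p) / 2)) => l l0 l1.
have := enorm_le_dot (nearest l l0 l1).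
have -> : y - (p + l *: (z - p)) = (y - p) - l *: (z - p).
  by apply/rowP => i; rewrite !mxE; ring.
move: (y - p) (z - p) => u w; rewrite !dotE (dotC w) => le_sq.
rewrite -subr_ge0 -(pmulr_rge0 _ l0); lra.
Qed.

Lemma proj_ball_sqdist_le Rad y p z : is_proj_ball Rad y p -> enorm z <= Rad ->
  dot (p - z) (p - z) <= dot (y - z) (y - z).
Proof.
case=> pR nearest zR.
have obtuse : dot (y - p) (z - p) <= 0.
  apply: nearest_point_obtuse => l l0 l1.
  by apply: nearest; apply: enorm_segment_le => //; apply: ltW.
have -> : y - z = (y - p) - (z - p) by apply/rowP => i; rewrite !mxE; ring.
rewrite -(opprB z p); move: (y - p) (z - p) obtuse => u w obtuse.
by have := dot_ge0 u; rewrite !dotE (dotC w); lra.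
Qed.

(* The Polyak step [y - ([A]_+ / |s|^2) s] is the projection of [y] onto the
   half-space [{z | A <= dot s (y - z)}] (when [s != 0]). *)
Lemma halfspace_step_sqdist_le y s z A :
  A <= dot s (y - z) ->
  let y' := y - (pos_part A / (enorm s ^+ 2)) *: s in
  dot (y' - z) (y' - z) <= dot (y - z) (y - z).
Proof.
move=> Asz /=; rewrite enorm_sqr.
have -> : y - (pos_part A / dot s s) *: s - z = (y - z) - (pos_part A / dot s s) *: s.
  by apply/rowP => i; rewrite !mxE; ring.
move: Asz; move: (y - z) => v Asv; rewrite !dotE (dotC v s).
set c := pos_part A / dot s s.
have [A0|A0] := lerP A 0.
  suff -> : c = 0 by lra.
  by rewrite /c /pos_part max_r ?mul0r.
have [ss0|ss0] := eqVneq (dot s s) 0.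
  by rewrite /c ss0 invr0 mulr0; lra.
have c0 : 0 <= c by rewrite divr_ge0 ?dot_ge0 ?le_max ?lexx ?orbT.
have cA : c * dot s s = A by rewrite /c /pos_part max_l ?ltW // divfK.
have : 0 <= c * (dot s v - A) by apply: mulr_ge0; lra.
nra.
Qed.

Lemma polyak_point_sqdist_le eta rho gx gradf s x z :
  gx + dot s (z - x) + rho <= 0 ->
  let p := polyak_point eta rho gx gradf s x in
  dot (p - z) (p - z) <= dot (x - eta *: gradf - z) (x - eta *: gradf - z).
Proof.
move=> zlin /=; rewrite /polyak_point; case: eqP => // _.
apply: halfspace_step_sqdist_le.
by move: zlin; rewrite !dotE; lra.
Qed.

Lemma convex_fun_secant (f : 'rV[R]_d -> R) x v l : convex_fun f ->
  0 <= l -> l <= 1 -> f (x + l *: v) - f x <= l * (f (x + v) - f x).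
Proof.
move=> cf l0 l1; have := cf (x + v) x l l0 l1.
have -> : l *: (x + v) + (1 - l) *: x = x + l *: v by apply/rowP => i; rewrite !mxE; ring.
lra.
Qed.

Lemma gradient_le_slope (f : 'rV[R]_d -> R) x gx v e :
  convex_fun f -> is_gradient f x gx -> 0 < e ->
  dot gx v - (f (x + v) - f x) <= e * enorm v.
Proof.
move=> cf gf e0; have [delta delta0 near_x] := gf e e0.
have v0 := enorm_ge0 v.
pose l := delta / (delta + 2 * (enorm v + 1)).
have l0 : 0 < l by rewrite divr_gt0 //; lra.
have l1 : l <= 1 by rewrite ler_pdivrMr ?mul1r; lra.
have lv : l * (delta + 2 * (enorm v + 1)) = delta by rewrite divfK // gt_eqF //; lra.
have small : enorm (l *: v) < delta by rewrite (enormZ _ (ltW l0)); nra.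
have := near_x _ small; rewrite dotZr (enormZ _ (ltW l0)) ler_norml => /andP [lin _].
have secant := convex_fun_secant x v cf (ltW l0) l1.
rewrite -subr_ge0 -(pmulr_rge0 _ l0); nra.
Qed.

Lemma gradient_le (f : 'rV[R]_d -> R) x gx z :
  convex_fun f -> is_gradient f x gx -> f x - f z <= dot gx (x - z).
Proof.
move=> cf gf; have -> : z = x + (z - x) by rewrite addrC subrK.
move: (z - x) => v; have -> : x - (x + v) = - v by rewrite opprD addNKr.
rewrite dotNr -subr_le0 opprK; have v0 := enorm_ge0 v.
apply/ler_addgt0Pr => e e0; rewrite add0r.
have e' : 0 < e / (enorm v + 1) by rewrite divr_gt0 // ltr_wpDl.
have slope := gradient_le_slope v cf gf e'.
have : e / (enorm v + 1) * enorm v <= e by rewrite mulrAC ler_pdivrMr ?ltr_wpDl //; nra.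
lra.
Qed.

(* One round of online gradient descent, with [u = x_t - z] and
   [u' = x_{t+1} - z]. *)
Lemma ogd_round_le (eta G a : R) (u u' gr : 'rV[R]_d) : 0 < eta ->
  dot u' u' <= dot (u - eta *: gr) (u - eta *: gr) ->
  a <= dot gr u -> dot gr gr <= G ^+ 2 ->
  a <= (dot u u - dot u' u') / (2 * eta) + eta / 2 * G ^+ 2.
Proof.
move=> eta0; rewrite !dotE (dotC u gr) => step lin grG.
have eta2 : 0 < 2 * eta by lra.
rewrite -(ler_pM2r eta2) (mulrDl _ _ (2 * eta)) divfK ?gt_eqF //.
have -> : eta / 2 * G ^+ 2 * (2 * eta) = eta * eta * G ^+ 2 by field.
have : 0 <= eta * (dot gr u - a) by apply: mulr_ge0; lra.
have : 0 <= eta * eta * (G ^+ 2 - dot gr gr) by rewrite mulr_ge0 ?mulr_ge0; lra.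
nra.
Qed.

End Steps.

Theorem mainTheorem9 (R : realType) (d T : nat)
  (g : 'rV[R]_d -> R) (f : nat -> 'rV[R]_d -> R)
  (grad : nat -> 'rV[R]_d -> 'rV[R]_d)
  (Rad Gf Gg sigma eps eta rho : R)
  (x s : nat -> 'rV[R]_d) (xstar : 'rV[R]_d) :
  (0 < d)%N -> (0 < T)%N ->
  convex_fun g ->
  (* (A1) *)
  0 < Rad -> (forall y, g y <= 0 -> enorm y <= Rad) ->
  (* (A2) *)
  (forall t, (1 <= t <= T)%N -> convex_fun (f t)) ->
  (forall t, (1 <= t <= T)%N -> forall y, is_gradient (f t) y (grad t y)) ->
  0 < Gf ->
  (forall t y, (1 <= t <= T)%N -> enorm y <= Rad -> enorm (grad t y) <= Gf) ->
  (* (A3) *)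
  0 < Gg ->
  (forall y u, enorm y <= Rad -> subgrad g y u -> enorm u <= Gg) ->
  (* (A4) *)
  0 < sigma -> 0 < eps ->
  (exists y, g y = - eps) ->
  (forall y u, g y = - eps -> subgrad g y u -> sigma <= enorm u) ->
  (* algorithm parameters *)
  0 < eta -> 0 <= rho -> rho <= eps ->
  (* the run of the algorithm *)
  enorm (x 1%N) <= Rad ->
  (forall t, (1 <= t <= T)%N -> subgrad g (x t) (s t)) ->
  (forall t, (1 <= t <= T)%N ->
     is_proj_ball Rad
       (polyak_point eta rho (g (x t)) (grad t (x t)) (s t) (x t))
       (x t.+1)) ->
  (* comparator: a minimizer of the cumulative loss over X_rho *)
  g xstar <= - rho ->
  (forall y, g y <= - rho ->
     \sum_(1 <= t < T.+1) f t xstar <= \sum_(1 <= t < T.+1) f t y) ->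
  \sum_(1 <= t < T.+1) (f t (x t) - f t xstar)
    <= 2 * Rad ^+ 2 / eta + eta / 2 * Gf ^+ 2 * T%:R.
Proof.
move=> _ _ _ Rad0 A1 fconv fgrad Gf0 fGf _ _ _ _ _ _ eta0 rho0 _ x1R gsub proj gz _.
have xR t : (1 <= t <= T)%N -> enorm (x t) <= Rad.
  by case: t => [|[|t]] // /andP[_ tT]; case: (proj t.+1 (ltnW tT)).
have zR : enorm xstar <= Rad by apply: A1; lra.
pose D t := dot (x t - xstar) (x t - xstar).
have round t : (1 <= t <= T)%N ->
    f t (x t) - f t xstar <= (D t - D t.+1) / (2 * eta) + eta / 2 * Gf ^+ 2.
  move=> tT; apply: (ogd_round_le (gr := grad t (x t))) => //.
  - apply: le_trans (proj_ball_sqdist_le (proj t tT) zR) _.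
    have -> : x t - xstar - eta *: grad t (x t) = x t - eta *: grad t (x t) - xstar.
      by apply/rowP => i; rewrite !mxE; ring.
    by apply: polyak_point_sqdist_le; have := gsub t tT xstar; lra.
  - exact: gradient_le (fconv t tT) (fgrad t tT (x t)).
  - by rewrite -(enorm_leE _ (ltW Gf0)); apply: fGf => //; apply: xR.
apply: le_trans; first by apply: ler_sum_nat => t; apply: round.
rewrite big_split /= sumr_const_nat subn1 /= -mulr_suml mulr_natr lerD2r.
rewrite (telescope_sumr_eq (fun t => - D t)) => [|//|t _]; last by rewrite opprK addrC.
have D1 : D 1%N <= 4 * Rad ^+ 2.
  apply: le_trans (dot_subr_le _ _) _.
  by move: x1R zR; rewrite !(enorm_leE _ (ltW Rad0)); lra.
have DT : 0 <= D T.+1 by apply: dot_ge0.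
have eta2 : 0 < 2 * eta by lra.
rewrite ler_pdivrMr //.
have -> : 2 * Rad ^+ 2 / eta * (2 * eta) = 4 * Rad ^+ 2 by field; rewrite gt_eqF.
lra.
Qed.
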